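(* Let $H$ be a pointed Hopf algebra and let $Q$ be the Ext-quiver of $\mathcal{M}^H$. Then at each vertex $v$ of $Q$, the number of arrows ending at $v$ equals the number of arrows starting at $v$.
   Context: The Ext-quiver of $\mathcal{M}^H$ has vertex set $G(H)$ and $\dim P(g,h)/\mathbb{K}(g-h)$ arrows $g\to h$, where $P(g,h)=\{x\in H:\Delta(x)=g\otimes x+x\otimes h\}$. *)

(* Tensors in H (x) H (resp. H (x) H (x) H) are represented by finite formal sums
   (seq of pairs, resp. triples); two formal sums denote the same tensor iff every
   bilinear (resp. trilinear) form H x H -> K takes the same value on them
   (bilinear forms separate points of H (x) H over a field). *)
From HB Require Import structures.
From mathcomp Require Import all_boot all_order all_algebra.
Set Implicit Arguments. Unset Strict Implicit. Unset Printing Implicit Defensive.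
Import Order.TTheory GRing.Theory.
Local Open Scope ring_scope.

Section Hopf.
Variables (K : fieldType) (H : algType K).

Definition bilinear_form (b : H -> H -> K) : Prop :=
  (forall (a : K) (x y z : H), b (a *: x + y) z = a * b x z + b y z) /\
  (forall (a : K) (x y z : H), b z (a *: x + y) = a * b z x + b z y).

Definition trilinear_form (t : H -> H -> H -> K) : Prop :=
  (forall (a : K) (x y u v : H), t (a *: x + y) u v = a * t x u v + t y u v) /\
  (forall (a : K) (x y u v : H), t u (a *: x + y) v = a * t u x v + t u y v) /\
  (forall (a : K) (x y u v : H), t u v (a *: x + y) = a * t u v x + t u v y).

Definition ev2 (b : H -> H -> K) (s : seq (H * H)) : K := \sum_(p <- s) b p.1 p.2.

Definition teq2 (s t : seq (H * H)) : Prop :=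
  forall b, bilinear_form b -> ev2 b s = ev2 b t.

Definition is_hopf (D : H -> seq (H * H)) (e : H -> K) (S : H -> H) : Prop :=
  (forall b, bilinear_form b -> forall (a : K) (x y : H),
      ev2 b (D (a *: x + y)) = a * ev2 b (D x) + ev2 b (D y)) /\
  (forall t, trilinear_form t -> forall x : H,
      \sum_(p <- D x) \sum_(q <- D p.1) t q.1 q.2 p.2 =
      \sum_(p <- D x) \sum_(q <- D p.2) t p.1 q.1 q.2) /\
  (forall (a : K) (x y : H), e (a *: x + y) = a * e x + e y) /\
  (forall x : H, \sum_(p <- D x) e p.1 *: p.2 = x) /\
  (forall x : H, \sum_(p <- D x) e p.2 *: p.1 = x) /\
  (forall b, bilinear_form b -> forall x y : H,
      ev2 b (D (x * y)) =
      \sum_(p <- D x) \sum_(q <- D y) b (p.1 * q.1) (p.2 * q.2)) /\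
  teq2 (D 1) [:: (1, 1)] /\
  (forall x y : H, e (x * y) = e x * e y) /\
  e 1 = 1 /\
  (forall (a : K) (x y : H), S (a *: x + y) = a *: S x + S y) /\
  (forall x : H, \sum_(p <- D x) S p.1 * p.2 = e x *: 1) /\
  (forall x : H, \sum_(p <- D x) p.1 * S p.2 = e x *: 1).

Definition subspace (C : H -> Prop) : Prop :=
  C 0 /\ forall (a : K) (x y : H), C x -> C y -> C (a *: x + y).

Definition subcoalgebra (D : H -> seq (H * H)) (C : H -> Prop) : Prop :=
  subspace C /\
  forall x, C x -> exists s : seq (H * H),
      (forall p, p \in s -> C p.1 /\ C p.2) /\ teq2 (D x) s.

Definition simple_subcoalgebra (D : H -> seq (H * H)) (C : H -> Prop) : Prop :=
  subcoalgebra D C /\ (exists x, C x /\ x <> 0) /\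
  forall C' : H -> Prop, subcoalgebra D C' -> (forall x, C' x -> C x) ->
    (forall x, C' x -> x = 0) \/ (forall x, C x -> C' x).

Definition pointed (D : H -> seq (H * H)) : Prop :=
  forall C, simple_subcoalgebra D C ->
    exists c : H, c <> 0 /\ forall x, C x <-> exists a : K, x = a *: c.

Definition grouplike (D : H -> seq (H * H)) (g : H) : Prop :=
  g <> 0 /\ teq2 (D g) [:: (g, g)].

Definition skewprim (D : H -> seq (H * H)) (g h x : H) : Prop :=
  teq2 (D x) [:: (g, x); (x, h)].

(* B is a set of representatives in P(g,h) of a basis of P(g,h)/K(g-h):
   the arrows g -> h of the Ext-quiver are indexed by the elements of B. *)
Definition quotient_basis (D : H -> seq (H * H)) (g h : H) (B : H -> Prop) : Prop :=
  (forall b, B b -> skewprim D g h b) /\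
  (forall (s : seq (K * H)) (c : K),
      uniq (map snd s) -> (forall p, p \in s -> B p.2) ->
      \sum_(p <- s) p.1 *: p.2 = c *: (g - h) ->
      forall p, p \in s -> p.1 = 0) /\
  (forall x, skewprim D g h x ->
      exists (s : seq (K * H)) (c : K),
        (forall p, p \in s -> B p.2) /\
        x = \sum_(p <- s) p.1 *: p.2 + c *: (g - h)).

Definition set_bijective (T : Type) (A B : T -> Prop) : Prop :=
  exists (f g : T -> T),
    (forall x, A x -> B (f x)) /\ (forall y, B y -> A (g y)) /\
    (forall x, A x -> g (f x) = x) /\ (forall y, B y -> f (g y) = y).

End Hopf.

(* Left multiplication by a group-like element k is a linear bijection of H
   (undone by left multiplication by S k) mapping P(g,h) into P(kg,kh) and
   g - h to kg - kh.  So it carries a basis of P(g,h) modulo K(g-h) to a family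
   in P(kg,kh) that is free modulo K(kg-kh), and by the Steinitz exchange
   argument (run with Zorn's lemma, as the bases may be infinite) that family
   injects into any basis of P(kg,kh) modulo K(kg-kh).  With k = v g^-1 the
   arrows g -> v inject into the arrows v -> v g^-1 v, and with k = v h^-1 the
   arrows v -> h inject into the arrows v h^-1 v -> v.  Since g |-> v g^-1 v is
   injective on G(H), the arrows ending at v and those starting at v inject into
   each other, and Cantor-Bernstein gives a bijection.

   Tensor identities are only given after pairing with K-valued bilinear forms;
   a linear functional taking the value 1 at a given nonzero vector (Zorn again)
   turns them into identities in H, e.g. S g * g = 1 for group-like g. *)

From HB Require Import structures.
From mathcomp Require Import all_boot all_order all_algebra.
From mathcomp Require Import boolp classical_sets functions cardinality.

Set Implicit Arguments.
Unset Strict Implicit.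
Unset Printing Implicit Defensive.
Import GRing.Theory.
Local Open Scope classical_set_scope.
Local Open Scope ring_scope.

Lemma chain_bound (T : Type) (I : eqType) (F : set (set T)) (Q : set T -> I -> Prop)
    (X0 : set T) (s : seq I) :
  total_on F subset -> (forall X Y i, X `<=` Y -> Q X i -> Q Y i) -> F X0 ->
  (forall i, i \in s -> exists2 X, F X & Q X i) ->
  exists2 Z, F Z & forall i, i \in s -> Q Z i.
Proof.
move=> Ftot Qmono FX0; elim: s => [|i s IHs] Qs; first by exists X0.
have [X FX QXi] := Qs i (mem_head _ _).
have [|Y FY QYs] := IHs; first by move=> j js; apply: Qs; rewrite inE js orbT.
have [XY|YX] := Ftot X Y FX FY.
- by exists Y => // j; rewrite inE => /predU1P[->|/QYs//]; apply: Qmono QXi.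
- by exists X => // j; rewrite inE => /predU1P[->|/QYs]; last exact: Qmono.
Qed.

Lemma uniq_map_inj_in (T U : eqType) (f : T -> U) (s : seq T) :
  uniq (map f s) -> {in s &, injective f}.
Proof.
elim: s => //= a s IHs /andP[fa_s us] p q; rewrite !inE.
move=> /predU1P[->|ps] /predU1P[->|qs] //= fpq.
- by rewrite fpq map_f in fa_s.
- by rewrite -fpq map_f in fa_s.
- exact: IHs.
Qed.

Lemma set_inj_card_le (T U : Type) (A : set T) (B : set U) (f : T -> U) :
  set_fun A B f -> set_inj A f -> (A #<= B)%card.
Proof.
move=> fAB finj; have /injfunPex[g] : exists2 f, set_fun A B f & set_inj A f.
  by exists f.
exact: inj_card_le.
Qed.

Section FreeModulo.
Variables (K : fieldType) (V : lmodType K) (w : V).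
Implicit Types (A C : set V) (s : seq (K * V)).

Definition free_mod A := forall s (c : K),
  uniq (map snd s) -> (forall p, p \in s -> A p.2) ->
  \sum_(p <- s) p.1 *: p.2 = c *: w -> forall p, p \in s -> p.1 = 0.

Definition span_mod A : set V := [set x | exists s (c : K),
  (forall p, p \in s -> A p.2) /\ x = \sum_(p <- s) p.1 *: p.2 + c *: w].

Lemma uniq_comb s : exists s',
  [/\ uniq (map snd s'), {subset map snd s' <= map snd s} &
      \sum_(p <- s') p.1 *: p.2 = \sum_(p <- s) p.1 *: p.2].
Proof.
elim: s => [|[c y] s [s' [uniq_s' sub_s' sum_s']]]; first by exists [::].
pose s'y := [seq q <- s' | q.2 == y]; pose s'ny := [seq q <- s' | q.2 != y].
exists ((c + \sum_(q <- s'y) q.1, y) :: s'ny); split.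
- rewrite /= (subseq_uniq (map_subseq _ (filter_subseq _ _)) uniq_s') andbT.
  apply/mapP => -[q]; rewrite mem_filter => /andP[/negP ne _] eyq.
  by rewrite eyq eqxx in ne.
- move=> z; rewrite /= !inE => /predU1P[->|/mapP[q]]; first by rewrite eqxx.
  by rewrite mem_filter => /andP[_ qs] ->; rewrite sub_s' ?orbT ?map_f.
- rewrite !big_cons /= -sum_s' [in RHS](bigID (fun q => q.2 == y)) /= !big_filter.
  rewrite scalerDl -addrA scaler_suml; congr (_ + (_ + _)).
  by apply: eq_bigr => q /eqP ->.
Qed.

Lemma span_mod_sub A : A `<=` span_mod A.
Proof.
move=> x Ax; exists [:: (1, x)], 0; split; first by move=> p; rewrite inE => /eqP ->.
by rewrite big_seq1 scale0r addr0 scale1r.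
Qed.

Lemma span_modZw A c : span_mod A (c *: w).
Proof. by exists [::], c; rewrite big_nil add0r. Qed.

Lemma span_modP A a x y : span_mod A x -> span_mod A y -> span_mod A (a *: x + y).
Proof.
move=> [s1 [c1 [s1A ->]]] [s2 [c2 [s2A ->]]].
exists ([seq (a * p.1, p.2) | p <- s1] ++ s2), (a * c1 + c2); split.
  by move=> p; rewrite mem_cat => /orP[/mapP[q /s1A Aq ->]|/s2A].
rewrite big_cat big_map /= scalerDr scaler_sumr scalerDl -scalerA addrACA.
by congr (_ + _ + _); apply: eq_bigr => p _; rewrite scalerA.
Qed.

Lemma span_mod_sum A s : (forall p, p \in s -> span_mod A p.2) ->
  span_mod A (\sum_(p <- s) p.1 *: p.2).
Proof.
elim: s => [|p s IHs] sA; first by rewrite big_nil -(scale0r w); apply: span_modZw.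
rewrite big_cons; apply: span_modP; first by apply: sA; rewrite mem_head.
by apply: IHs => q qs; apply: sA; rewrite inE qs orbT.
Qed.

Lemma span_mod_trans A C : A `<=` span_mod C -> span_mod A `<=` span_mod C.
Proof.
move=> AC x [s [c [sA ->]]]; rewrite -[\sum_(p <- s) _]scale1r.
by apply: span_modP; [apply: span_mod_sum => p /sA /AC | apply: span_modZw].
Qed.

Lemma free_mod_sub A C : A `<=` C -> free_mod C -> free_mod A.
Proof. by move=> AC freeC s c us sA; apply: freeC => // p /sA /AC. Qed.

Lemma free_mod_setU1 C x : free_mod C -> ~ span_mod C x -> free_mod (x |` C).
Proof.
move=> freeC Cx s c us sxC sum_s.
pose s' := [seq q <- s | q.2 != x]; pose d := \sum_(q <- s | q.2 == x) q.1.
have sum_s' : \sum_(p <- s) p.1 *: p.2 = d *: x + \sum_(p <- s') p.1 *: p.2.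
  rewrite (bigID (fun q => q.2 == x)) /= big_filter scaler_suml; congr (_ + _).
  by apply: eq_bigr => q /eqP ->.
have s'C p : p \in s' -> C p.2.
  by rewrite mem_filter => /andP[/eqP ne /sxC] [].
have us' : uniq (map snd s') by rewrite (subseq_uniq _ us) ?map_subseq ?filter_subseq.
have [d0|dn0] := eqVneq d 0; last first.
  case: Cx; have -> : x = (- d^-1) *: (\sum_(p <- s') p.1 *: p.2) + (d^-1 * c) *: w.
    apply: (@scalerI _ _ d) => //.
    rewrite scalerDr !scalerA mulrN mulfV // mulrA mulfV // !mul1r scaleN1r.
    by rewrite -sum_s sum_s' addrC addrK.
  apply: span_modP; last exact: span_modZw.
  by apply: span_mod_sum => p /s'C; apply: span_mod_sub.
have s'0 p : p \in s' -> p.1 = 0.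
  by apply: (freeC _ c) => //; rewrite -sum_s sum_s' d0 scale0r add0r.
move=> p ps; have [px|pnx] := eqVneq p.2 x; last by apply: s'0; rewrite mem_filter pnx.
move: d0; rewrite /d -big_filter (bigD1_seq p) ?mem_filter ?px ?eqxx //=; last first.
  exact/filter_uniq/(map_uniq us).
rewrite big1_seq ?addr0 // => q /andP[/eqP qp]; rewrite mem_filter => /andP[/eqP qx qs].
by case: qp; apply: (uniq_map_inj_in us) => //; rewrite qx px.
Qed.

Lemma free_mod_notin_span C a : free_mod C -> C a -> ~ span_mod (C `\ a) a.
Proof.
move=> freeC Ca [s [c [sCa sum_s]]]; have [s' [us' sub_s' sum_s']] := uniq_comb s.
have s'Ca p : p \in s' -> (C `\ a) p.2.
  by move=> ps'; have /sub_s'/mapP[q /sCa qCa ->] := map_f snd ps'.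
suff : (-1 : K) = 0 by move/eqP; rewrite oppr_eq0 oner_eq0.
apply: (freeC ((-1, a) :: s') (- c) _ _ _ (-1, a) (mem_head _ _)).
- rewrite /= us' andbT; apply/mapP => -[q /s'Ca[_ qa] aq]; exact: qa (esym aq).
- by move=> p; rewrite inE => /predU1P[->|/s'Ca[]].
- by rewrite big_cons sum_s' /= {1}sum_s scaleN1r opprD addrC addrA addrN add0r scaleNr.
Qed.

Section Exchange.
Variables (A Bs : set V).
Hypotheses (freeA : free_mod A) (A_span : A `<=` span_mod Bs).
Implicit Type G : set (V * V).

(* [G] is a partial injection from [A] to [Bs] and [exchanged G] replaces every
   vector of its domain by its partner.  The fourth clause of [partial_exchange]
   keeps the vectors of [A] that remain to be exchanged out of the image of [G]. *)
Definition exchanged G : set V :=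
  [set y | (exists a, G (a, y)) \/ (A y /\ forall b, ~ G (y, b))].

Definition partial_exchange G := [/\
  forall a b, G (a, b) -> A a /\ Bs b,
  forall a b b', G (a, b) -> G (a, b') -> b = b',
  forall a a' b, G (a, b) -> G (a', b) -> a = a',
  forall a y, G (a, y) -> A y -> exists b, G (y, b) &
  free_mod (exchanged G)].

Lemma partial_exchange0 : partial_exchange set0.
Proof. by split=> //; apply: free_mod_sub freeA => y [[]|[]]. Qed.

Lemma partial_exchange_bigcup (F : set (set (V * V))) :
  F `<=` partial_exchange -> total_on F subset ->
  partial_exchange (\bigcup_(X in F) X).
Proof.
move=> Fex Ftot; have [[X0 FX0]|noF] := pselect (exists X, F X); last first.
  suff -> : \bigcup_(X in F) X = set0 by apply: partial_exchange0.
  by apply/seteqP; split=> // p [X FX _]; apply: noF; exists X.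
set U := \bigcup_(X in F) X.
have common p q : U p -> U q -> exists Z, [/\ partial_exchange Z, Z p & Z q].
  move=> [X FX Xp] [Y FY Yq]; have [XY|YX] := Ftot X Y FX FY.
  - by exists Y; split=> //; [apply: Fex | apply: XY].
  - by exists X; split=> //; [apply: Fex | apply: YX].
split.
- by move=> a b [X /Fex[XAB _ _ _ _]]; apply: XAB.
- move=> a b b' Uab Uab'; have [Z [[_ Zfun _ _ _] Zab Zab']] := common _ _ Uab Uab'.
  exact: Zfun Zab Zab'.
- move=> a a' b Uab Ua'b; have [Z [[_ _ Zinj _ _] Zab Za'b]] := common _ _ Uab Ua'b.
  exact: Zinj Zab Za'b.
- move=> a y [X FX Xay] Ay; have [_ _ _ Xdom _] := Fex X FX.
  by have [b Xyb] := Xdom _ _ Xay Ay; exists b, X.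
move=> s c us sU.
pose Q (X : set (V * V)) (p : K * V) :=
  (exists a, X (a, p.2)) \/ (A p.2 /\ forall b, ~ U (p.2, b)).
have [||Z FZ sZ] := chain_bound (Q := Q) (s := s) Ftot _ FX0.
- by move=> X Y p XY [[a /XY Ya]|]; [left; exists a|right].
- move=> p /sU [[a [X FX Xa]]|nU]; first by exists X => //; left; exists a.
  by exists X0 => //; right.
have [_ _ _ _ freeZ] := Fex Z FZ; apply: (freeZ _ c) => // p /sZ [|[Ap nU]]; first by left.
by right; split=> // b Zb; apply: (nU b); exists Z.
Qed.

Lemma partial_exchange_maximal G : partial_exchange G ->
  (forall G', G `<` G' -> ~ partial_exchange G') ->
  forall a, A a -> exists b, G (a, b).
Proof.
move=> [GAB Gfun Ginj Gdom freeG] Gmax a Aa; apply: contrapT => /forallNP nGa.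
have a_notin_img a0 : ~ G (a0, a) by move=> /Gdom/(_ Aa)[b]; apply: nGa.
set C := exchanged G `\ a.
have img_C a0 y : G (a0, y) -> C y.
  by move=> Gy; split; [left; exists a0 | move=> ya; apply: (a_notin_img a0); rewrite -ya].
have [b [Bsb Cb]] : exists b, Bs b /\ ~ span_mod C b.
  apply: contrapT => /forallNP Bs_span.
  apply: (free_mod_notin_span freeG (or_intror (conj Aa nGa))).
  apply: span_mod_trans (A_span Aa) => y Bsy.
  by apply: contrapT => Cy; apply: (Bs_span y).
have b_notin_C : ~ C b by move/span_mod_sub.
have dom_b : b <> a -> A b -> exists b', G (b, b').
  move=> ba Ab; apply: contrapT => /forallNP nGb.
  by apply: b_notin_C; split=> //; right.
apply: (Gmax (G `|` [set (a, b)])).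
  by split=> [p|/(_ (a, b) (or_intror erefl))/nGa]; [left|].
split.
- by move=> a1 b1 [/GAB|[-> ->]].
- move=> a1 b1 b2 [G1|[ea1 eb1]] [G2|[ea2 eb2]]; first exact: Gfun G1 G2.
  + by case: (nGa b1); rewrite -ea2.
  + by case: (nGa b2); rewrite -ea1.
  + by rewrite eb1 eb2.
- move=> a1 a2 b1 [G1|[-> eb1]] [G2|[-> eb2]] //; first exact: Ginj G1 G2.
  + by case: b_notin_C; rewrite -eb2; apply: img_C G1.
  + by case: b_notin_C; rewrite -eb1; apply: img_C G2.
- move=> a0 y [G0|[_ ->]] Ay.
    by have [b' Gb'] := Gdom _ _ G0 Ay; exists b'; left.
  have [->|ba] := pselect (b = a); first by exists a; right.
  by have [b' Gb'] := dom_b ba Ay; exists b'; left.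
apply: free_mod_sub (free_mod_setU1 (free_mod_sub _ freeG) Cb); last by move=> y [].
move=> y [[a1 [G1|[_ <-]]]|[Ay nG'y]]; [right; exact: img_C G1 | by left |].
right; split; first by right; split=> // b' Gb'; apply: (nG'y b'); left.
by move=> ya; apply: (nG'y b); right; rewrite ya.
Qed.

Lemma free_mod_card_le : (A #<= Bs)%card.
Proof.
have [G [Gex Gmax]] := Zorn_bigcup partial_exchange_bigcup.
have [GAB _ Ginj _ _] := Gex.
have /choice[f Gf] a : exists b, A a -> G (a, b).
  have [Aa|nAa] := pselect (A a); last by exists a.
  by have [b Gab] := partial_exchange_maximal Gex Gmax Aa; exists b.
apply: (@set_inj_card_le _ _ _ _ f).
  by move=> a Aa; have [] := GAB _ _ (Gf a Aa).
move=> a a' /set_mem Aa /set_mem Aa' faa'.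
by apply: (Ginj _ _ (f a) (Gf a Aa)); rewrite faa'; apply: Gf.
Qed.

End Exchange.

End FreeModulo.

Lemma free_mod_image (K : fieldType) (U W : lmodType K) (f : {linear U -> W})
    (f' : {linear W -> U}) (w : U) (A : set U) :
  cancel f f' -> free_mod w A -> free_mod (f w) (f @` A).
Proof.
move=> fK freeA s c us sA sum_s p ps.
pose g (q : K * W) := (q.1, f' q.2).
apply: (freeA (map g s) c _ _ _ (g p) (map_f g ps)).
- rewrite -map_comp (map_comp f' snd) map_inj_in_uniq //.
  move=> _ _ /mapP[q /sA[a _ <-] ->] /mapP[r /sA[b _ <-] ->].
  by rewrite !fK => ->.
- by move=> _ /mapP[q /sA[a Aa fa] ->] /=; rewrite -fa fK.
- rewrite big_map /=; under eq_bigr do rewrite -linearZ.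
  by rewrite -linear_sum sum_s linearZ fK.
Qed.

Section Separation.
Variables (K : fieldType) (V : lmodType K).

Definition lin_closed (M : set V) := forall a y z, M y -> M z -> M (a *: y + z).

Lemma exists_hyperplane (x : V) : x != 0 ->
  exists M : set V, [/\ lin_closed M, ~ M x & forall y, exists c, M (y - c *: x)].
Proof.
move=> xn0; pose P M := lin_closed M /\ ~ M x.
have P_bigcup (F : set (set V)) : F `<=` P -> total_on F subset -> P (\bigcup_(X in F) X).
  move=> FP Ftot; split; last by move=> [X /FP[]].
  move=> a y z [X FX Xy] [Y FY Yz]; have [XY|YX] := Ftot X Y FX FY.
  - by exists Y => //; apply: (FP _ FY).1 => //; apply: XY.
  - by exists X => //; apply: (FP _ FX).1 => //; apply: YX.
have [M [[Mlin Mx] Mmax]] := Zorn_bigcup P_bigcup.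
have M0 : M 0.
  apply: contrapT => nM0; apply: (Mmax [set 0]).
    split=> [m Mm|/(_ 0 erefl)//]; case: nM0.
    by rewrite -(addNr m) -scaleN1r; apply: Mlin.
  by split=> [a _ _ -> ->|x0]; [rewrite scaler0 addr0 | rewrite x0 eqxx in xn0].
exists M; split=> // y; have [My|nMy] := pselect (M y).
  by exists 0; rewrite scale0r subr0.
have [m [c [Mm xE]]] : exists m c, M m /\ x = m + c *: y.
  apply: contrapT => nMy_x; apply: (Mmax [set z | exists m c, M m /\ z = m + c *: y]).
    split=> [m Mm|sub]; first by exists m, 0; rewrite scale0r addr0.
    by apply: nMy; apply: sub; exists 0, 1; rewrite add0r scale1r.
  split=> // a _ _ [m1 [c1 [Mm1 ->]]] [m2 [c2 [Mm2 ->]]].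
  exists (a *: m1 + m2), (a * c1 + c2); split; first exact: Mlin.
  by rewrite scalerDr scalerDl scalerA addrACA.
have cn0 : c != 0 by apply: contraPneq Mx => c0; rewrite xE c0 scale0r addr0.
exists c^-1; rewrite xE scalerDr scalerA mulVf // scale1r opprD addrCA subrr addr0.
by rewrite -scaleNr -[_ *: m]addr0; apply: Mlin.
Qed.

Lemma exists_scalar_eq1 (x : V) : x != 0 -> exists phi : {scalar V}, phi x = 1.
Proof.
move=> /exists_hyperplane[M [Mlin Mx /choice[phi Mphi]]].
have M0 : M 0 by have := Mlin (-1) _ _ (Mphi 0) (Mphi 0); rewrite scaleN1r addNr.
have coord_uniq y c c' : M (y - c *: x) -> M (y - c' *: x) -> c = c'.
  move=> Myc Myc'; apply: contrapT => /eqP; rewrite eq_sym -subr_eq0 => cc'; apply: Mx.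
  have := Mlin 1 _ _ Myc (Mlin (-1) _ _ Myc' M0).
  rewrite addr0 scale1r scaleN1r opprB addrC addrA subrK -scalerBl => Mdiff.
  by have := Mlin (c' - c)^-1 _ _ Mdiff M0; rewrite addr0 scalerA mulVf // scale1r; apply.
have phi_lin : scalar phi.
  move=> a y z; apply: (coord_uniq (a *: y + z)) => //.
  by rewrite scalerDl -scalerA opprD addrACA -scalerBr; apply: Mlin.
exists (HB.pack phi (GRing.isLinear.Build K V K *%R phi phi_lin) : {scalar V}) => /=.
by apply: (coord_uniq x) => //; rewrite scale1r subrr.
Qed.

End Separation.

Lemma card_le_sigma (I T : Type) (P : set I) (s : I -> I) (A A' : I -> set T) :
  set_fun P P s -> set_inj P s -> (forall i, P i -> (A i #<= A' (s i))%card) ->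
  ([set p | P p.1 /\ A p.1 p.2] #<= [set p | P p.1 /\ A' p.1 p.2])%card.
Proof.
elim/Ppointed: T => T in A A' *.
    by move=> _ _ _; apply: (@set_inj_card_le _ _ _ _ id) => -[i t]; case: (no t).
move=> sP sinj AA'.
have /choice[f hf] i : exists f, P i -> set_fun (A i) (A' (s i)) f /\ set_inj (A i) f.
  have [Pi|nPi] := pselect (P i); last by exists id.
  by have /pcard_leP/injfunPex[f fA finj] := AA' i Pi; exists f.
apply: (@set_inj_card_le _ _ _ _ (fun p => (s p.1, f p.1 p.2))).
  by move=> [i t] [Pi Ait]; split; [apply: sP | apply: (hf i Pi).1].
move=> [i t] [j u] /set_mem[Pi Ait] /set_mem[Pj Aju] [eij].
have eq_ij := sinj i j (mem_set Pi) (mem_set Pj) eij; subst j.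
by move=> /(hf i Pi).2 -> //; apply: mem_set.
Qed.

Lemma set_bijective_card_eq (T : Type) (A B : set T) :
  (A #= B)%card -> set_bijective A B.
Proof.
elim/Ppointed: T => T in A B *; first by exists id, id; do ![split] => x; case: (no x).
move=> /card_set_bijP[f [fAB finj fsurj]]; exists f, (pinv A f); do !split.
- exact: fAB.
- by move=> y By; apply: (surjpinv_image_sub fsurj); exists y.
- by move=> x /mem_set Ax; apply: pinvKV.
- by move=> y /mem_set By; apply: (surjpK _ fsurj).
Qed.

Section HopfAlgebra.
Variables (K : fieldType) (H : algType K).

Lemma teq2_sum (V : lmodType K) (F : H -> H -> V) (s t : seq (H * H)) :
  (forall z, linear (F^~ z)) -> (forall z, linear (F z)) -> teq2 s t ->
  \sum_(p <- s) F p.1 p.2 = \sum_(p <- t) F p.1 p.2.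
Proof.
move=> Fl Fr st; apply/eqP; rewrite -subr_eq0; apply: contraT.
move=> /exists_scalar_eq1[phi]; rewrite linearB !linear_sum.
have /st : bilinear_form (fun u z => phi (F u z)).
  by split=> a x y z; rewrite ?Fl ?Fr linearP.
by rewrite /ev2 => -> /eqP; rewrite subrr eq_sym oner_eq0.
Qed.

Lemma bilinear_form_mull (b : H -> H -> K) (k : H) : bilinear_form b ->
  bilinear_form (fun u z => b (k * u) (k * z)).
Proof.
by move=> [bl br]; split=> a x y z; rewrite mulrDr -scalerAr; [apply: bl|apply: br].
Qed.

Variables (D : H -> seq (H * H)) (e : H -> K) (S : H -> H).
Hypothesis hopf : is_hopf D e S.

Lemma counit_scalar : scalar e.
Proof. by case: hopf => _ [_ []]. Qed.

Lemma counitl x : \sum_(p <- D x) e p.1 *: p.2 = x.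
Proof. by case: hopf => _ [_ [_ []]]. Qed.

Lemma comul_mul b : bilinear_form b -> forall x y,
  ev2 b (D (x * y)) = \sum_(p <- D x) \sum_(q <- D y) b (p.1 * q.1) (p.2 * q.2).
Proof. by case: hopf => _ [_ [_ [_ [_ [Dmul _]]]]]; apply: Dmul. Qed.

Lemma comul1 : teq2 (D 1) [:: (1, 1)].
Proof. by case: hopf => _ [_ [_ [_ [_ [_ []]]]]]. Qed.

Lemma antipode_linear : linear S.
Proof. by case: hopf => _ [_ [_ [_ [_ [_ [_ [_ [_ []]]]]]]]]. Qed.

Lemma antipodel x : \sum_(p <- D x) S p.1 * p.2 = e x *: 1.
Proof. by case: hopf => _ [_ [_ [_ [_ [_ [_ [_ [_ [_ []]]]]]]]]]. Qed.

Lemma antipoder x : \sum_(p <- D x) p.1 * S p.2 = e x *: 1.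
Proof. by case: hopf => _ [_ [_ [_ [_ [_ [_ [_ [_ [_ []]]]]]]]]]. Qed.

Lemma grouplike_counit g : grouplike D g -> e g = 1.
Proof.
move=> [gn0 Dg]; have : e g *: g = g.
  rewrite -[RHS](counitl g) (teq2_sum (F := fun u z => e u *: z) _ _ Dg) ?big_seq1 //.
  - by move=> z a x y; rewrite counit_scalar scalerDl scalerA.
  - by move=> z a x y; rewrite scalerDr !scalerA mulrC.
move=> /eqP; rewrite -subr_eq0 -[X in _ - X]scale1r -scalerBl scaler_eq0 subr_eq0.
by case/orP=> /eqP.
Qed.

Lemma grouplike_antipodel g : grouplike D g -> S g * g = 1.
Proof.
move=> gl; have [_ Dg] := gl.
rewrite -[RHS]scale1r -(grouplike_counit gl) -antipodel.
rewrite (teq2_sum (F := fun u z => S u * z) _ _ Dg) ?big_seq1 //.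
- by move=> z a x y; rewrite antipode_linear mulrDl scalerAl.
- by move=> z a x y; rewrite mulrDr scalerAr.
Qed.

Lemma grouplike_antipoder g : grouplike D g -> g * S g = 1.
Proof.
move=> gl; have [_ Dg] := gl.
rewrite -[RHS]scale1r -(grouplike_counit gl) -antipoder.
rewrite (teq2_sum (F := fun u z => u * S z) _ _ Dg) ?big_seq1 //.
- by move=> z a x y; rewrite mulrDl scalerAl.
- by move=> z a x y; rewrite antipode_linear mulrDr scalerAr.
Qed.

Lemma comul_mull k y (b : H -> H -> K) : grouplike D k -> bilinear_form b ->
  ev2 b (D (k * y)) = ev2 (fun u z => b (k * u) (k * z)) (D y).
Proof.
move=> [_ Dk] [bl br]; rewrite comul_mul //.
have := Dk (fun u z => \sum_(q <- D y) b (u * q.1) (z * q.2)).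
rewrite /ev2 big_seq1 => -> //.
by split=> a x x' z; rewrite mulr_sumr -big_split; apply: eq_bigr => q _;
  rewrite mulrDl -scalerAl ?bl ?br.
Qed.

Lemma grouplike_mul g h : grouplike D g -> grouplike D h -> grouplike D (g * h).
Proof.
move=> gl [hn0 Dh]; split=> [gh0|b bb].
  by apply: hn0; rewrite -[h]mul1r -(grouplike_antipodel gl) -mulrA gh0 mulr0.
by rewrite (comul_mull _ gl bb) (Dh _ (bilinear_form_mull _ bb)) /ev2 !big_seq1.
Qed.

Lemma grouplike_antipode g : grouplike D g -> grouplike D (S g).
Proof.
move=> gl; have [Sgg gSg] := (grouplike_antipodel gl, grouplike_antipoder gl).
split=> [Sg0|b bb]; first by move/eqP: gSg; rewrite Sg0 mulr0 eq_sym oner_eq0.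
have bSg := bilinear_form_mull (S g) bb.
rewrite /ev2 big_seq1; have := comul_mull (S g) gl bSg.
rewrite gSg (comul1 bSg) /ev2 big_seq1 /= !mulr1 => ->.
by apply: eq_bigr => p _; rewrite !mulrA Sgg !mul1r.
Qed.

Lemma skewprim_mull k g h x : grouplike D k -> skewprim D g h x ->
  skewprim D (k * g) (k * h) (k * x).
Proof.
move=> kl Px b bb; rewrite (comul_mull _ kl bb) (Px _ (bilinear_form_mull _ bb)).
by rewrite /ev2 !big_cons !big_nil.
Qed.

End HopfAlgebra.

Section ExtQuiver.
Variables (K : fieldType) (H : algType K).
Variables (D : H -> seq (H * H)) (e : H -> K) (S : H -> H).
Hypothesis hopf : is_hopf D e S.
Variable B : H -> H -> H -> Prop.
Hypothesis hB :
  forall g h, grouplike D g -> grouplike D h -> quotient_basis D g h (B g h).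

Lemma arrows_card_le_mull g h k :
  grouplike D g -> grouplike D h -> grouplike D k ->
  (B g h #<= B (k * g) (k * h))%card.
Proof.
move=> gl hl kl; have [Bskew [freeB _]] := hB gl hl.
have [_ [_ spanB]] := hB (grouplike_mul hopf kl gl) (grouplike_mul hopf kl hl).
have mulK : cancel (k \*o idfun) (S k \*o idfun).
  by move=> x /=; rewrite mulrA (grouplike_antipodel hopf kl) mul1r.
rewrite -(card_le_eql (inj_card_eq (in2W (can_inj mulK)))).
have freekB : free_mod (k * g - k * h) [set k * b | b in B g h].
  by rewrite -mulrBr; apply: (free_mod_image mulK freeB).
apply: (free_mod_card_le freekB).
by move=> _ [b Bb <-]; apply: spanB; apply: (skewprim_mull hopf kl (Bskew b Bb)).
Qed.

Variables (v : H) (vl : grouplike D v).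
Local Notation mirror g := (v * S g * v).

Lemma grouplike_mirror g : grouplike D g -> grouplike D (mirror g).
Proof.
move=> gl; have vSg := grouplike_mul hopf vl (grouplike_antipode hopf gl).
exact: (grouplike_mul hopf vSg vl).
Qed.

Lemma mirror_inj : set_inj (grouplike D) (fun g => mirror g).
Proof.
move=> g g' /set_mem gl /set_mem gl' eq_mirror.
have [Svv vSv] := (grouplike_antipodel hopf vl, grouplike_antipoder hopf vl).
have unmirror x : S v * (v * x * v) * S v = x.
  by rewrite !mulrA Svv mul1r -mulrA vSv mulr1.
have eqS : S g = S g' by rewrite -(unmirror (S g)) eq_mirror unmirror.
rewrite -[g]mulr1 -(grouplike_antipodel hopf gl') -eqS mulrA.
by rewrite (grouplike_antipoder hopf gl) mul1r.
Qed.

Lemma in_arrows_card_le g : grouplike D g -> (B g v #<= B v (mirror g))%card.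
Proof.
move=> gl; have Sgl := grouplike_antipode hopf gl.
have := arrows_card_le_mull gl vl (grouplike_mul hopf vl Sgl).
by rewrite -mulrA (grouplike_antipodel hopf gl) mulr1.
Qed.

Lemma out_arrows_card_le h : grouplike D h -> (B v h #<= B (mirror h) v)%card.
Proof.
move=> hl; have Shl := grouplike_antipode hopf hl.
have := arrows_card_le_mull vl hl (grouplike_mul hopf vl Shl).
by rewrite -[v * S h * h]mulrA (grouplike_antipodel hopf hl) mulr1.
Qed.

End ExtQuiver.

Theorem lemma4p3 (K : fieldType) (H : algType K)
  (D : H -> seq (H * H)) (e : H -> K) (S : H -> H)
  (hopf : is_hopf D e S) (hpt : pointed D)
  (B : H -> H -> H -> Prop)
  (hB : forall g h, grouplike D g -> grouplike D h -> quotient_basis D g h (B g h))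
  (v : H) (hv : grouplike D v) :
  set_bijective
    (fun p : H * H => grouplike D p.1 /\ B p.1 v p.2)
    (fun p : H * H => grouplike D p.1 /\ B v p.1 p.2).
Proof.
have mirror_gl := grouplike_mirror hopf hv.
have mirror_injective := mirror_inj hopf hv.
apply/set_bijective_card_eq/Cantor_Bernstein.
- apply: (card_le_sigma (A := B^~ v) mirror_gl mirror_injective).
  exact: (in_arrows_card_le hopf hB hv).
- apply: (card_le_sigma (A := B v) (A' := B^~ v) mirror_gl mirror_injective).
  exact: (out_arrows_card_le hopf hB hv).
Qed.
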